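(* Let $H$ be the face algebra described in the context. The braided Hopf algebra ${}_RH$ decomposes as ${}_RH=\bigoplus_{i\in\mathbb Z_N}H^i$, where each $H^i=\mathrm{span}_{\mathbb C}\{X^i_i(p):p\in\mathbb Z_N\}$ is a Hopf algebra over $\mathbb C1^i$ with unit $1^i=\sum_pX^i_i(p)$ (with the structure $X^i_i(p)X^i_i(q)=\delta_{p,q}X^i_i(p)$, $\underline\Delta(X^i_i(s))=\sum_{w+q=s}X^i_i(w)\otimes X^i_i(q)$, counit $X^i_i(s)\mapsto\delta_{s,0}1^i$, antipode $X^i_i(s)\mapsto X^i_i(-s)$). Moreover, for all $i,j\in\mathbb Z_N$ the linear map $\iota^j_i:H^i\to H^j$, $X^i_i(p)\mapsto X^j_j(p)$, is a Hopf algebra isomorphism.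
   Context: Let $N\ge2$, $\mathbb Z_N=\mathbb Z/N\mathbb Z$, $\omega\in\mathbb C$ a primitive $N$th root of unity. $H$ is the $\mathbb C$-vector space with basis $\{X^i_j(s):i,j,s\in\mathbb Z_N\}$, with multiplication $X^i_j(p)X^k_l(q)=\delta_{j,k}\delta_{p,q}X^i_l(p)$, unit $1=\sum_{i,p}X^i_i(p)$, comultiplication $\Delta(X^i_j(s))=\sum_{p+q=s}X^i_j(p)\otimes X^{i+p}_{j+p}(q)$, counit $\varepsilon(X^i_j(s))=\delta_{s,0}$, antipode $S(X^i_j(p))=X^{j+p}_{i+p}(-p)$, and $R=\sum_{i,j,p}X^i_j(p)\otimes X^j_{j+p}(i-j)\omega^{-p(i-j)}$; $(H,R)$ is a quasitriangular weak Hopf algebra (Hayashi's face algebra). ${}_RH=C_H(H_s)=\{1_1hS(1_2)\}$ is its braided Hopf algebra with adjoint action $h\cdot x=h_1xS(h_2)$, comultiplication $\underline\Delta(x)=x_1S(R^2)\otimes R^1\cdot x_2$, counit $\varepsilon_t(h)=\varepsilon(1_1h)1_2$. *)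

(* Hayashi's face algebra H over algC (the algebraic
   complex numbers, standing in for C), realised concretely as the free
   vector space on the basis {X^i_j(s) : i,j,s in Z_N}. *)
From HB Require Import structures.
From mathcomp Require Import all_boot all_order all_algebra all_field.
Set Implicit Arguments. Unset Strict Implicit. Unset Printing Implicit Defensive.
Import GRing.Theory Num.Theory.
Local Open Scope ring_scope.

(* basis index (i, j, s) of X^i_j(s) *)
Definition idx (N : nat) : finType := ('Z_N * 'Z_N * 'Z_N)%type.
(* H = span of the X^i_j(s): a vector is its coordinate function *)
Definition H (N : nat) := {ffun idx N -> algC^o}.
(* H (x) H, with basis X(x) (x) X(y) *)
Definition T (N : nat) := {ffun (idx N * idx N) -> algC^o}.
Definition T3 (N : nat) := {ffun (idx N * idx N * idx N) -> algC^o}.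

Section FaceAlgebra.
Variable N : nat.
Variable omega : algC.
Local Notation H := (H N).
Local Notation T := (T N).
Local Notation T3 := (T3 N).

Definition Xe (x : idx N) : H := [ffun t => (t == x)%:R].
Definition X (i j s : 'Z_N) : H := Xe (i, j, s).

Definition tens (a b : H) : T := [ffun t => a t.1 * b t.2].
Definition tens3L (t : T) (c : H) : T3 := [ffun w => t (w.1.1, w.1.2) * c w.2].
Definition tens3R (a : H) (t : T) : T3 := [ffun w => a w.1.1 * t (w.1.2, w.2)].

Definition mulX (x y : idx N) : H :=
  if (x.1.2 == y.1.1) && (x.2 == y.2) then X x.1.1 y.1.2 x.2 else 0.
Definition mul (a b : H) : H := \sum_x \sum_y (a x * b y) *: mulX x y.

Definition one : H := \sum_(i : 'Z_N) \sum_(p : 'Z_N) X i i p.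

Definition DeltaX (x : idx N) : T :=
  \sum_(p : 'Z_N) \sum_(q : 'Z_N | p + q == x.2)
     tens (X x.1.1 x.1.2 p) (X (x.1.1 + p) (x.1.2 + p) q).
Definition Delta (a : H) : T := \sum_x a x *: DeltaX x.

Definition eps (a : H) : algC := \sum_x a x * (x.2 == 0)%:R.

Definition SX (x : idx N) : H := X (x.1.2 + x.2) (x.1.1 + x.2) (- x.2).
Definition S (a : H) : H := \sum_x a x *: SX x.

(* omega^{-k} for k in Z_N (well defined as omega^N = 1) *)
Definition omega_inv_pow (k : 'Z_N) : algC := omega ^+ (val (- k)).

Definition Rmat : T :=
  \sum_(i : 'Z_N) \sum_(j : 'Z_N) \sum_(p : 'Z_N)
     omega_inv_pow (p * (i - j)) *: tens (X i j p) (X j (j + p) (i - j)).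

(* adjoint action h . x = h_1 x S(h_2) *)
Definition ad (h x : H) : H :=
  \sum_(uv : idx N * idx N) (Delta h) uv *: mul (mul (Xe uv.1) x) (S (Xe uv.2)).

(* braided comultiplication x_1 S(R^2) (x) R^1 . x_2 *)
Definition bDelta (x : H) : T :=
  \sum_(yz : idx N * idx N) (Delta x) yz *:
    \sum_(r : idx N * idx N) Rmat r *:
       tens (mul (Xe yz.1) (S (Xe r.2))) (ad (Xe r.1) (Xe yz.2)).

(* eps_t(h) = eps(1_1 h) 1_2 *)
Definition eps_t (h : H) : H :=
  \sum_(uv : idx N * idx N) ((Delta one) uv * eps (mul (Xe uv.1) h)) *: Xe uv.2.

(* membership in _R H = { 1_1 h S(1_2) } *)
Definition in_RH (x : H) : Prop := exists h : H, x = ad one h.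

Definition Hi (i : 'Z_N) : {vspace H} := <<[seq X i i p | p <- enum 'Z_N]>>%VS.

Definition one_i (i : 'Z_N) : H := \sum_(p : 'Z_N) X i i p.

(* the scalar counit of H^i: X^i_i(s) |-> delta_{s,0} (the coefficient of 1^i) *)
Definition eps_i (i : 'Z_N) (x : H) : algC := \sum_(p : 'Z_N) x (i, i, p) * (p == 0)%:R.

Definition S_i (i : 'Z_N) (x : H) : H := \sum_(p : 'Z_N) x (i, i, p) *: X i i (- p).

Definition iota_face (i j : 'Z_N) (x : H) : H := \sum_(p : 'Z_N) x (i, i, p) *: X j j p.

(* t lies in V (x) V and s is a witness decomposition *)
Definition tens_rep (V : {vspace H}) (t : T) (s : seq (H * H)) : Prop :=
  all (fun ab => (ab.1 \in V) && (ab.2 \in V)) s /\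
  t = \sum_(ab <- s) tens ab.1 ab.2.

(* (V, m, u, D, e, Sa) is a Hopf algebra over the ground field
   (all structure maps are considered restricted to V). *)
Definition hopf_on (V : {vspace H}) (m : H -> H -> H) (u : H) (D : H -> T)
    (e : H -> algC) (Sa : H -> H) : Prop :=
  [/\
     [/\ u \in V,
         (forall x y, x \in V -> y \in V -> m x y \in V),
         (forall x, x \in V -> Sa x \in V),
         (forall x, x \in V -> exists s, tens_rep V (D x) s) &
         (forall (a : algC) x y z, x \in V -> y \in V -> z \in V ->
            [/\ m (a *: x + y) z = a *: m x z + m y z,
                m z (a *: x + y) = a *: m z x + m z y,
                D (a *: x + y) = a *: D x + D y,
                e (a *: x + y) = a * e x + e y &
                Sa (a *: x + y) = a *: Sa x + Sa y])],
     (forall x y z, x \in V -> y \in V -> z \in V ->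
        [/\ m (m x y) z = m x (m y z), m u x = x & m x u = x]),
     (forall x s, x \in V -> tens_rep V (D x) s ->
        [/\ \sum_(ab <- s) tens3L (D ab.1) ab.2 = \sum_(ab <- s) tens3R ab.1 (D ab.2),
            \sum_(ab <- s) e ab.1 *: ab.2 = x,
            \sum_(ab <- s) e ab.2 *: ab.1 = x,
            \sum_(ab <- s) m (Sa ab.1) ab.2 = e x *: u &
            \sum_(ab <- s) m ab.1 (Sa ab.2) = e x *: u]),
     (forall x y s s', x \in V -> y \in V -> tens_rep V (D x) s -> tens_rep V (D y) s' ->
        D (m x y) = \sum_(ab <- s) \sum_(cd <- s') tens (m ab.1 cd.1) (m ab.2 cd.2)
        /\ e (m x y) = e x * e y) &
     (D u = tens u u /\ e u = 1)].

Definition hopf_iso (V W : {vspace H}) (f : H -> H)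
    (m : H -> H -> H) (u : H) (D : H -> T) (e : H -> algC) (Sa : H -> H)
    (m' : H -> H -> H) (u' : H) (D' : H -> T) (e' : H -> algC) (Sa' : H -> H) : Prop :=
  [/\ (forall (a : algC) x y, x \in V -> y \in V -> f (a *: x + y) = a *: f x + f y),
      (forall x, x \in V -> f x \in W),
      (forall x y, x \in V -> y \in V -> f x = f y -> x = y),
      (forall y, y \in W -> exists2 x, x \in V & f x = y) &
      [/\ (forall x y, x \in V -> y \in V -> f (m x y) = m' (f x) (f y)),
          f u = u',
          (forall x s, x \in V -> tens_rep V (D x) s ->
             D' (f x) = \sum_(ab <- s) tens (f ab.1) (f ab.2)),
          (forall x, x \in V -> e' (f x) = e x) &
          (forall x, x \in V -> f (Sa x) = Sa' (f x))]].

End FaceAlgebra.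

(* Everything is computed on the basis X^i_j(s) of H.  On basis vectors the
   adjoint action is  X^a_b(c) . X^k_l(q) = [c = 0, b = k = l] X^a_a(q),  so
   1 . X^k_l(q) = [k = l] X^k_k(q) and _R H = 1 . H is the direct sum of the
   H^i.  In the braided coproduct of X^i_i(s) only the term of R with trivial
   grading survives (its omega-power is 1), giving
   Delta(X^i_i(s)) = sum_{w+q=s} X^i_i(w) (x) X^i_i(q).

   Hence H^i is the Hopf algebra of functions on Z_N: writing  of_fun i e  for
   sum_p e(p) X^i_i(p), the product is pointwise, the coproduct is
   e |-> ((w,q) |-> e(w+q)) (the tensor [coprod_fun i e]), the counit is e(0)
   and the antipode is e |-> e(-_).  Each Hopf axiom is checked on an
   arbitrary decomposition of a coproduct, which only matters through the
   bilinear map applied to it ([bilin_eval_coprod]); the iota^j_i just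
   relabel the index i and so preserve all this structure. *)

From Pilot Require Import Defs.
From HB Require Import structures.
From mathcomp Require Import all_boot all_order all_algebra all_field.
From mathcomp Require Import ring.
Set Implicit Arguments. Unset Strict Implicit. Unset Printing Implicit Defensive.
Import GRing.Theory Num.Theory.
Local Open Scope ring_scope.

(* Facts about functions satisfying the library predicate [linear], without
   packing them as linear-map structures (most maps below are partial
   applications of bilinear operations).  Commutativity of the scalars is
   only needed for [lin_scale_const]. *)
Section LinearFunctions.
Variable R : comPzRingType.
Variables U V W : lmodType R.

Lemma lin0 (f : V -> W) : linear f -> f 0 = 0.
Proof.
move=> hf; have := hf 1 0 0; rewrite addr0 !scale1r => h.
by apply: (@addrI _ (f 0)); rewrite addr0 -h.
Qed.

Lemma linZ (f : V -> W) : linear f -> forall k x, f (k *: x) = k *: f x.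
Proof. by move=> hf k x; rewrite -[k *: x]addr0 hf lin0 // addr0. Qed.

Lemma linD (f : V -> W) : linear f -> forall x y, f (x + y) = f x + f y.
Proof. by move=> hf x y; have := hf 1 x y; rewrite !scale1r. Qed.

Lemma lin_sum (f : V -> W) (I : Type) (r : seq I) (P : pred I) (F : I -> V) :
  linear f -> f (\sum_(i <- r | P i) F i) = \sum_(i <- r | P i) f (F i).
Proof.
move=> hf; elim: r => [|a r IH]; first by rewrite !big_nil lin0.
by rewrite !big_cons; case: (P a); rewrite ?linD ?IH.
Qed.

Lemma lin_sumZ (f : V -> W) (I : Type) (r : seq I) (P : pred I) (c : I -> R)
    (F : I -> V) :
  linear f -> f (\sum_(i <- r | P i) c i *: F i) = \sum_(i <- r | P i) c i *: f (F i).
Proof. by move=> hf; rewrite lin_sum //; apply: eq_bigr => i _; rewrite linZ. Qed.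

Lemma lin_comp (f : V -> W) (g : U -> V) :
  linear f -> linear g -> linear (fun x => f (g x)).
Proof. by move=> hf hg k x y; rewrite hg hf. Qed.

Lemma lin_ext (f g : V -> W) : (forall x, f x = g x) -> linear g -> linear f.
Proof. by move=> e hg k x y; rewrite !e hg. Qed.

Lemma lin_coord (I : finType) (G : I -> W) :
  linear (fun a : {ffun I -> R^o} => \sum_x (a x : R) *: G x).
Proof.
move=> k a b; rewrite scaler_sumr -big_split; apply: eq_bigr => x _.
by rewrite !ffunE scalerDl scalerA.
Qed.

Lemma lin_sumf (I : finType) (f : I -> V -> W) :
  (forall j, linear (f j)) -> linear (fun x => \sum_j f j x).
Proof.
by move=> hf k x y; rewrite scaler_sumr -big_split; apply: eq_bigr => j _; exact: hf.
Qed.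

Lemma lin_scale_const (f : V -> W) (k0 : R) : linear f -> linear (fun x => k0 *: f x).
Proof. by move=> hf k x y; rewrite hf scalerDr !scalerA mulrC. Qed.

Lemma lin_scale_vec (f : V -> R^o) (v : W) : linear f -> linear (fun a => f a *: v).
Proof. by move=> hf k a b; rewrite hf scalerDl scalerA. Qed.

End LinearFunctions.

Lemma scale_regular (R : pzRingType) (a b : R) : a *: (b : R^o) = a * b.
Proof. by []. Qed.

Lemma sum_only (I : finType) (W : nmodType) (q : I) (F : I -> W) :
  (forall u, u != q -> F u = 0) -> \sum_u F u = F q.
Proof. by move=> h; rewrite (bigD1 q) //= big1 ?addr0 // => u /h. Qed.
Arguments sum_only {I W} q [F].

Lemma sum_delta (R : pzRingType) (W : lmodType R) (I : finType) (k : I) (F : I -> W) :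
  \sum_i (i == k)%:R *: F i = F k.
Proof.
by rewrite (sum_only k) ?eqxx ?scale1r // => i /negbTE ->; rewrite scale0r.
Qed.

Lemma sum_fix N (W : nmodType) (u c : 'Z_N) (F : 'Z_N -> W) :
  \sum_(v : 'Z_N | u + v == c) F v = F (c - u).
Proof. by rewrite (big_pred1 (c - u)) // => v /=; apply/eqP/eqP => [<-|->]; ring. Qed.

Lemma sum_pair N (W : nmodType) (F : 'Z_N -> 'Z_N -> 'Z_N -> W) :
  \sum_(p : 'Z_N) \sum_(a : 'Z_N) \sum_(b : 'Z_N | a + b == p) F p a b
  = \sum_(a : 'Z_N) \sum_(b : 'Z_N) F (a + b) a b.
Proof.
rewrite exchange_big; apply: eq_bigr => a _.
rewrite (exchange_big_dep xpredT) //=; apply: eq_bigr => b _.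
by rewrite (big_pred1 (a + b)) // => p; rewrite /= eq_sym.
Qed.

Section FaceAlgebra.
Variable N : nat.
Implicit Types (i j l p q s w : 'Z_N) (x y : idx N) (a b h : H N) (ds : seq (H N * H N)).

Lemma XeE x (t : idx N) : Xe x t = (t == x)%:R.
Proof. by rewrite ffunE. Qed.

Lemma XE i j s (t : idx N) : X i j s t = (t == (i, j, s))%:R.
Proof. by rewrite ffunE. Qed.

Lemma basis_decomp a : a = \sum_x a x *: Xe x.
Proof.
apply/ffunP => t; rewrite sum_ffunE (sum_only t) => [|x /negbTE hx].
  by rewrite ffunE XeE eqxx -[RHS]/(a t * 1) mulr1.
by rewrite ffunE XeE eq_sym hx scaler0.
Qed.

Lemma tensXe x y (uv : idx N * idx N) : tens (Xe x) (Xe y) uv = (uv == (x, y))%:R.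
Proof. by case: uv => u v; rewrite !ffunE xpair_eqE /= -natrM mulnb. Qed.

Lemma tens_linl b : linear (fun a => tens a b).
Proof. by move=> k a a'; apply/ffunP => t; rewrite !ffunE mulrDl scalerAl. Qed.

Lemma tens_linr a : linear (tens a).
Proof. by move=> k b b'; apply/ffunP => t; rewrite !ffunE mulrDr scalerAr. Qed.

Lemma tensZl k a b : tens (k *: a) b = k *: tens a b.
Proof. exact: (linZ (tens_linl b)). Qed.

Lemma tensZr k a b : tens a (k *: b) = k *: tens a b.
Proof. exact: (linZ (tens_linr a)). Qed.

Lemma mul_linl b : linear (fun a => Defs.mul a b).
Proof.
apply: lin_ext (lin_coord (fun x => \sum_y b y *: mulX x y)) => a.
by apply: eq_bigr => x _; rewrite scaler_sumr; apply: eq_bigr => y _; rewrite scalerA.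
Qed.

Lemma mul_linr a : linear (Defs.mul a).
Proof.
apply: lin_ext (lin_coord (fun y => \sum_x a x *: mulX x y)) => b.
rewrite /Defs.mul exchange_big.
apply: eq_bigr => y _; rewrite scaler_sumr.
by apply: eq_bigr => x _; rewrite scalerA mulrC.
Qed.

Lemma mulZl k a b : Defs.mul (k *: a) b = k *: Defs.mul a b.
Proof. exact: (linZ (mul_linl b)). Qed.

Lemma mulXeXe x y : Defs.mul (Xe x) (Xe y) = mulX x y.
Proof.
rewrite /Defs.mul (sum_only x) => [|x' hx]; last first.
  by apply: big1 => y' _; rewrite XeE (negbTE hx) mul0r scale0r.
rewrite (sum_only y) => [|y' hy]; last by rewrite !XeE (negbTE hy) mulr0 scale0r.
by rewrite !XeE !eqxx mulr1 scale1r.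
Qed.

Lemma mulXX i j s k l q :
  Defs.mul (X i j s) (X k l q) = ((j == k) && (s == q))%:R *: X i l s.
Proof. by rewrite mulXeXe /mulX /=; case: ifP => _; rewrite ?scale1r ?scale0r. Qed.

Lemma coord_Xe (W : lmodType algC) (G : idx N -> W) x : \sum_y Xe x y *: G y = G x.
Proof. by under eq_bigr => y _ do rewrite XeE; exact: sum_delta. Qed.

Lemma Delta_lin : linear (@Delta N).
Proof. exact: lin_coord. Qed.

Lemma eps_lin : linear (@eps N : H N -> algC^o).
Proof. exact: (lin_coord (W := algC^o)). Qed.

Lemma DeltaXe x : Delta (Xe x) = DeltaX x.
Proof. exact: coord_Xe. Qed.

Lemma epsXe x : eps (Xe x) = (x.2 == 0)%:R.
Proof. exact: (coord_Xe (W := algC^o)). Qed.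

Lemma SXX i j s : S (X i j s) = X (j + s) (i + s) (- s).
Proof. exact: coord_Xe. Qed.

(* [tensor_eval t G] applies to t : H (x) H the linear map whose value on
   X(u) (x) X(v) is G (u, v). *)
Definition tensor_eval (W : lmodType algC) (t : T N) (G : idx N * idx N -> W) : W :=
  \sum_uv t uv *: G uv.

Lemma tensor_eval_lin (W : lmodType algC) (G : idx N * idx N -> W) :
  linear (fun t => tensor_eval t G).
Proof. exact: lin_coord. Qed.

Lemma tensor_eval_tens (W : lmodType algC) (G : idx N * idx N -> W) x y :
  tensor_eval (tens (Xe x) (Xe y)) G = G (x, y).
Proof. by rewrite /tensor_eval; under eq_bigr => uv _ do rewrite tensXe; exact: sum_delta. Qed.

Lemma tensor_eval_DeltaX (W : lmodType algC) (G : idx N * idx N -> W) x :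
  tensor_eval (DeltaX x) G = \sum_p \sum_(q | p + q == x.2)
     G ((x.1.1, x.1.2, p), (x.1.1 + p, x.1.2 + p, q)).
Proof.
rewrite /DeltaX (lin_sum _ _ _ (tensor_eval_lin G)); apply: eq_bigr => p _.
by rewrite (lin_sum _ _ _ (tensor_eval_lin G)); apply: eq_bigr => q _; rewrite tensor_eval_tens.
Qed.

Lemma ad_linl a : linear (fun h => ad h a).
Proof. exact: (lin_comp (tensor_eval_lin _) Delta_lin). Qed.

Lemma ad_linr h : linear (ad h).
Proof.
move=> k a b; rewrite /ad scaler_sumr -big_split; apply: eq_bigr => uv _ /=.
by rewrite (mul_linr _ k) (mul_linl _ k) scalerDr !scalerA mulrC.
Qed.

Lemma adXX i j c k l q :
  ad (X i j c) (X k l q) = ((c == 0) && (j == k) && (l == k))%:R *: X i i q.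
Proof.
rewrite /ad DeltaXe -/(tensor_eval _ _) tensor_eval_DeltaX /=.
under eq_bigr => u _ do rewrite sum_fix SXX !mulXX mulZl mulXX scalerA.
rewrite (sum_only q) => [|u hu]; last by rewrite (negbTE hu) andbF mul0r scale0r.
rewrite eqxx andbT.
have -> : j + q + (c - q) = j + c by ring.
have -> : i + q + (c - q) = i + c by ring.
have -> : - (c - q) = q - c by ring.
(* the surviving term requires q = q - c, i.e. c = 0 *)
have [->|hc] := eqVneq c 0.
  rewrite !addr0 subr0 eqxx andbT andTb -natrM mulnb.
  by case: eqP => [->|].
case: (q =P q - c) => [hq|_]; last by rewrite andbF /= ?mulr0n ?mulr0 !scale0r.
have : q - (q - c) = c by ring.
by rewrite -hq subrr => /esym/eqP; rewrite (negbTE hc).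
Qed.

(* The component H^i, identified with the functions Z_N -> C through
   [of_fun]; the coordinates (i, i, p) of a vector are the values of the
   function. *)

Definition of_fun i (e : 'Z_N -> algC) : H N := \sum_p e p *: X i i p.

Lemma of_funE i e (t : idx N) :
  of_fun i e t = if (t.1.1 == i) && (t.1.2 == i) then e t.2 else 0.
Proof.
rewrite sum_ffunE; case: t => [[a b] c] /=.
rewrite (sum_only c) => [|p hp]; rewrite !ffunE !xpair_eqE /= scale_regular.
  by rewrite eqxx andbT; case: (_ && _); rewrite /= ?mulr1 ?mulr0.
by rewrite [c == p]eq_sym (negbTE hp) !andbF mulr0.
Qed.

Lemma of_fun_coef i e q : of_fun i e (i, i, q) = e q.
Proof. by rewrite of_funE /= !eqxx. Qed.

Lemma of_fun_ext i e f : (forall p, e p = f p) -> of_fun i e = of_fun i f.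
Proof. by move=> h; apply: eq_bigr => p _; rewrite h. Qed.

Lemma of_fun_inj i e f : of_fun i e = of_fun i f -> forall p, e p = f p.
Proof. by move=> h p; rewrite -(of_fun_coef i e) h of_fun_coef. Qed.

Lemma of_fun_lin i k e f :
  k *: of_fun i e + of_fun i f = of_fun i (fun p => k * e p + f p).
Proof.
rewrite /of_fun scaler_sumr -big_split; apply: eq_bigr => p _.
by rewrite scalerA scalerDl.
Qed.

Lemma XinHi i p : X i i p \in Hi i.
Proof. by apply: memv_span; apply: map_f; rewrite mem_enum. Qed.

Lemma of_fun_in i e : of_fun i e \in Hi i.
Proof. by apply: rpred_sum => p _; apply: rpredZ; apply: XinHi. Qed.

Lemma Hi_support i a (t : idx N) :
  a \in Hi i -> ~~ ((t.1.1 == i) && (t.1.2 == i)) -> a t = 0.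
Proof.
move=> /coord_span -> ht; rewrite sum_ffunE big1 // => k _.
rewrite ffunE; set y := _`_k; suff -> : y t = 0 by rewrite scaler0.
rewrite /y /= (nth_map 0) ?size_tuple // ffunE; case: eqP => // et.
by move: ht; rewrite et /= !eqxx.
Qed.

Lemma memHi i a : a \in Hi i -> a = of_fun i (fun p => a (i, i, p)).
Proof.
move=> ha; apply/ffunP => t; rewrite of_funE.
case: ifP => [/andP[/eqP h1 /eqP h2]|/negbT h]; last exact: (Hi_support ha h).
by case: t h1 h2 {ha} => [[u v] c] /= -> ->.
Qed.

Lemma mul_of_fun i e f : Defs.mul (of_fun i e) (of_fun i f) = of_fun i (fun p => e p * f p).
Proof.
rewrite /of_fun (lin_sumZ _ _ _ _ (mul_linl _)); apply: eq_bigr => p _.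
rewrite (lin_sumZ _ _ _ _ (mul_linr _)).
rewrite (sum_only p) => [|q hq]; last by rewrite mulXX eq_sym (negbTE hq) andbF scale0r scaler0.
by rewrite mulXX !eqxx scale1r scalerA mulrC.
Qed.

Lemma one_i_of_fun i : one_i i = of_fun i (fun _ => 1).
Proof. by apply: eq_bigr => p _; rewrite scale1r. Qed.

Lemma eps_iE i a : eps_i i a = a (i, i, 0).
Proof. by rewrite /eps_i (sum_only 0) ?eqxx ?mulr1 // => p /negbTE ->; rewrite mulr0. Qed.

Lemma S_iE i a : S_i i a = of_fun i (fun p => a (i, i, - p)).
Proof.
rewrite /S_i /of_fun (reindex_inj (@oppr_inj _)) /=.
by apply: eq_bigr => p _; rewrite opprK.
Qed.

Lemma iotaE i j a : iota_face i j a = of_fun j (fun p => a (i, i, p)).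
Proof. by []. Qed.

Lemma eps_iX i w : eps_i i (X i i w) = (w == 0)%:R.
Proof. by rewrite eps_iE XE !xpair_eqE !eqxx /= eq_sym. Qed.

Lemma S_iX i w : S_i i (X i i w) = X i i (- w).
Proof.
rewrite /S_i (sum_only w) => [|p hp]; first by rewrite XE !eqxx scale1r.
by rewrite XE !xpair_eqE !eqxx /= (negbTE hp) scale0r.
Qed.

Lemma iotaX i j w : iota_face i j (X i i w) = X j j w.
Proof.
rewrite iotaE /of_fun (sum_only w) => [|p hp]; first by rewrite XE !eqxx scale1r.
by rewrite XE !xpair_eqE !eqxx /= (negbTE hp) scale0r.
Qed.

Lemma eps_i_lin i : linear (eps_i i : H N -> algC^o).
Proof. by move=> k a b; rewrite !eps_iE !ffunE. Qed.

Lemma S_i_lin i : linear (S_i i).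
Proof. by move=> k a b; rewrite !S_iE of_fun_lin; apply: of_fun_ext => p; rewrite !ffunE. Qed.

Lemma iota_lin i j : linear (iota_face i j).
Proof. by move=> k a b; rewrite !iotaE of_fun_lin; apply: of_fun_ext => p; rewrite !ffunE. Qed.

Lemma ad_one_X k l s : ad (Defs.one N) (X k l s) = (l == k)%:R *: X k k s.
Proof.
rewrite /Defs.one (lin_sum _ _ _ (ad_linl _)).
under eq_bigr => i _ do rewrite (lin_sum _ _ _ (ad_linl _)).
rewrite (sum_only k) => [|i hi]; last first.
  by apply: big1 => p _; rewrite adXX (negbTE hi) andbF /= scale0r.
rewrite (sum_only 0) => [|p hp]; last by rewrite adXX (negbTE hp) /= scale0r.
by rewrite adXX !eqxx.
Qed.

Lemma ad_one_of_fun i e : ad (Defs.one N) (of_fun i e) = of_fun i e.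
Proof.
rewrite /of_fun (lin_sumZ _ _ _ _ (ad_linr _)); apply: eq_bigr => p _.
by rewrite ad_one_X eqxx scale1r.
Qed.

Lemma in_sumHi k a : a \in Hi k -> a \in (\sum_(i : 'Z_N) Hi i)%VS.
Proof.
move=> ha; apply/memv_sumP; exists (fun j => (j == k)%:R *: a); last by rewrite sum_delta.
by move=> j _; case: eqP => [->|_]; rewrite ?scale1r ?scale0r ?rpred0.
Qed.

Lemma in_RH_iff a : in_RH a <-> a \in (\sum_(i : 'Z_N) Hi i)%VS.
Proof.
split.
  case=> h ->; rewrite {1}(basis_decomp h) (lin_sumZ _ _ _ _ (ad_linr _)).
  apply: rpred_sum => [[[k l] s]] _; apply: rpredZ.
  rewrite [Xe _]/(X k l s) ad_one_X; apply: (@in_sumHi k).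
  by rewrite rpredZ ?XinHi.
case/memv_sumP => vs hvs ->; exists (\sum_i vs i).
rewrite (lin_sum _ _ _ (ad_linr _)); apply: eq_bigr => j _.
by rewrite (memHi (hvs j isT)) ad_one_of_fun.
Qed.

(* the coordinate (i, i, p) of a sum of elements of the H^j only sees H^i *)
Lemma directHi : directv (\sum_(i : 'Z_N) Hi i)%VS.
Proof.
apply/directv_sum_independent => us hus hsum i _.
rewrite (memHi (hus i isT)); transitivity (of_fun i (fun _ => 0)); last first.
  by apply: big1 => p _; rewrite scale0r.
apply: of_fun_ext => p.
have := congr1 (fun f : H N => f (i, i, p)) hsum; rewrite /= sum_ffunE ffunE => <-.
rewrite (sum_only i) // => j hj.
by rewrite (memHi (hus j isT)) of_funE /= eq_sym (negbTE hj).
Qed.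

Lemma eps_t_X i s : eps_t (X i i s) = (s == 0)%:R *: one_i i.
Proof.
have -> : eps_t (X i i s) = tensor_eval (Delta (Defs.one N))
    (fun uv => eps (Defs.mul (Xe uv.1) (X i i s)) *: Xe uv.2).
  by apply: eq_bigr => uv _; rewrite scalerA.
rewrite /Defs.one (lin_sum _ _ _ Delta_lin) (lin_sum _ _ _ (tensor_eval_lin _)).
under eq_bigr => j _ do rewrite (lin_sum _ _ _ Delta_lin) (lin_sum _ _ _ (tensor_eval_lin _)).
under eq_bigr => j _ do under eq_bigr => p _ do rewrite DeltaXe tensor_eval_DeltaX /=.
under eq_bigr => j _ do rewrite sum_pair.
rewrite (sum_only i) => [|j hj]; last first.
  apply: big1 => a _; apply: big1 => b _.
  by rewrite mulXX (negbTE hj) /= scale0r (lin0 eps_lin) scale0r.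
rewrite (bigD1 s) //= [X in _ + X]big1 ?addr0 => [|a ha]; last first.
  apply: big1 => b _.
  by rewrite mulXX (negbTE ha) andbF /= scale0r (lin0 eps_lin) scale0r.
rewrite /one_i scaler_sumr; apply: eq_bigr => b _.
rewrite mulXX !eqxx scale1r epsXe /=.
by case: eqP => [->|_]; rewrite ?addr0 // !scale0r.
Qed.

(* The Hopf
   axioms in [hopf_on] quantify over arbitrary decompositions of a coproduct;
   for a bilinear expression the result only depends on the tensor. *)

Definition bilin (W : lmodType algC) (B : H N -> H N -> W) :=
  (forall b, linear (fun a => B a b)) /\ (forall a, linear (B a)).

Lemma bilin_basis (W : lmodType algC) (B : H N -> H N -> W) : bilin B ->
  forall a b, B a b = \sum_x \sum_y (a x * b y) *: B (Xe x) (Xe y).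
Proof.
move=> [hl hr] a b; rewrite {1}(basis_decomp a) (lin_sumZ _ _ _ _ (hl b)).
apply: eq_bigr => x _; rewrite {1}(basis_decomp b) (lin_sumZ _ _ _ _ (hr _)) scaler_sumr.
by apply: eq_bigr => y _; rewrite scalerA.
Qed.

Lemma bilin_eval_rep (W : lmodType algC) (B : H N -> H N -> W) (t : T N) ds :
  bilin B -> t = \sum_(ab <- ds) tens ab.1 ab.2 ->
  \sum_(ab <- ds) B ab.1 ab.2 = tensor_eval t (fun uv => B (Xe uv.1) (Xe uv.2)).
Proof.
move=> hB ->; rewrite /tensor_eval.
under eq_bigr => ab _ do rewrite (bilin_basis hB) pair_big /=.
rewrite exchange_big /=; apply: eq_bigr => uv _.
by rewrite sum_ffunE scaler_suml; apply: eq_bigr => ab _; rewrite ffunE.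
Qed.

Definition coprod_fun i (e : 'Z_N -> algC) : T N :=
  \sum_w \sum_q e (w + q) *: tens (X i i w) (X i i q).

Definition coprod_rep i (e : 'Z_N -> algC) : seq (H N * H N) :=
  [seq (e (wq.1 + wq.2) *: X i i wq.1, X i i wq.2) | wq <- index_enum ('Z_N * 'Z_N)%type].

Lemma coprod_rep_spec i e : tens_rep (Hi i) (coprod_fun i e) (coprod_rep i e).
Proof.
split; first by apply/allP => ab /mapP [wq _ ->] /=; rewrite rpredZ ?XinHi.
rewrite /coprod_rep big_map /coprod_fun pair_big /=; apply: eq_bigr => wq _.
by rewrite tensZl.
Qed.

Lemma bilin_eval_coprod (W : lmodType algC) (B : H N -> H N -> W) i e ds :
  bilin B -> coprod_fun i e = \sum_(ab <- ds) tens ab.1 ab.2 ->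
  \sum_(ab <- ds) B ab.1 ab.2 = \sum_w \sum_q e (w + q) *: B (X i i w) (X i i q).
Proof.
move=> hB hs; rewrite (bilin_eval_rep hB hs) /coprod_fun (lin_sum _ _ _ (tensor_eval_lin _)).
apply: eq_bigr => w _; rewrite (lin_sum _ _ _ (tensor_eval_lin _)).
by apply: eq_bigr => q _; rewrite (linZ (tensor_eval_lin _)) tensor_eval_tens.
Qed.

Lemma coprod_counitL i e ds : coprod_fun i e = \sum_(ab <- ds) tens ab.1 ab.2 ->
  \sum_(ab <- ds) eps_i i ab.1 *: ab.2 = of_fun i e.
Proof.
move=> hs; rewrite (bilin_eval_coprod (B := fun a b => eps_i i a *: b) _ hs); last first.
  by split=> [b|a]; [exact: (lin_scale_vec b (eps_i_lin i)) | exact: lin_scale_const].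
rewrite exchange_big /=; apply: eq_bigr => q _.
rewrite (sum_only 0) => [|w hw]; last by rewrite eps_iX (negbTE hw) !scale0r scaler0.
by rewrite eps_iX eqxx scale1r add0r.
Qed.

Lemma coprod_counitR i e ds : coprod_fun i e = \sum_(ab <- ds) tens ab.1 ab.2 ->
  \sum_(ab <- ds) eps_i i ab.2 *: ab.1 = of_fun i e.
Proof.
move=> hs; rewrite (bilin_eval_coprod (B := fun a b => eps_i i b *: a) _ hs); last first.
  by split=> [b|a]; [exact: lin_scale_const | exact: (lin_scale_vec a (eps_i_lin i))].
apply: eq_bigr => w _.
rewrite (sum_only 0) => [|q hq]; last by rewrite eps_iX (negbTE hq) !scale0r scaler0.
by rewrite eps_iX eqxx scale1r addr0.
Qed.

Lemma sum_scale_one_i i (k : algC) : \sum_w k *: X i i (- w) = k *: one_i i.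
Proof.
rewrite /one_i scaler_sumr (reindex_inj (@oppr_inj _)) /=.
by apply: eq_bigr => w _; rewrite opprK.
Qed.

Lemma coprod_antipodeL i e ds : coprod_fun i e = \sum_(ab <- ds) tens ab.1 ab.2 ->
  \sum_(ab <- ds) Defs.mul (S_i i ab.1) ab.2 = e 0 *: one_i i.
Proof.
move=> hs; rewrite (bilin_eval_coprod (B := fun a b => Defs.mul (S_i i a) b) _ hs); last first.
  by split=> [b|a]; [exact: (lin_comp (mul_linl b) (S_i_lin i)) | exact: mul_linr].
rewrite -sum_scale_one_i; apply: eq_bigr => w _.
rewrite (sum_only (- w)) => [|q hq]; last first.
  by rewrite S_iX mulXX eqxx /= eq_sym (negbTE hq) scale0r scaler0.
by rewrite S_iX mulXX !eqxx scale1r subrr.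
Qed.

Lemma coprod_antipodeR i e ds : coprod_fun i e = \sum_(ab <- ds) tens ab.1 ab.2 ->
  \sum_(ab <- ds) Defs.mul ab.1 (S_i i ab.2) = e 0 *: one_i i.
Proof.
move=> hs; rewrite (bilin_eval_coprod (B := fun a b => Defs.mul a (S_i i b)) _ hs); last first.
  by split=> [b|a]; [exact: mul_linl | exact: (lin_comp (mul_linr a) (S_i_lin i))].
rewrite /one_i scaler_sumr; apply: eq_bigr => w _.
rewrite (sum_only (- w)) => [|q hq]; last first.
  rewrite S_iX mulXX eqxx /=; case: eqP => [hw|_]; last by rewrite scale0r scaler0.
  by move: hq; rewrite hw opprK eqxx.
by rewrite S_iX mulXX !eqxx opprK eqxx scale1r subrr.
Qed.

Lemma coprod_mul i e f ds ds' :
  coprod_fun i e = \sum_(ab <- ds) tens ab.1 ab.2 ->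
  coprod_fun i f = \sum_(ab <- ds') tens ab.1 ab.2 ->
  coprod_fun i (fun p => e p * f p) =
  \sum_(ab <- ds) \sum_(cd <- ds') tens (Defs.mul ab.1 cd.1) (Defs.mul ab.2 cd.2).
Proof.
move=> hs hs'.
have hB (ab : H N * H N) : bilin (fun c d => tens (Defs.mul ab.1 c) (Defs.mul ab.2 d)).
  split=> [d|c]; first exact: (lin_comp (tens_linl _) (mul_linr _)).
  exact: (lin_comp (tens_linr _) (mul_linr _)).
under eq_bigr => ab _ do rewrite (bilin_eval_coprod (hB ab) hs').
rewrite (bilin_eval_coprod (B := fun a b => \sum_w \sum_q
   f (w + q) *: tens (Defs.mul a (X i i w)) (Defs.mul b (X i i q))) _ hs); last first.
  split=> [b|a]; apply: lin_sumf => w; apply: lin_sumf => q; apply: lin_scale_const.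
    exact: (lin_comp (tens_linl _) (mul_linl _)).
  exact: (lin_comp (tens_linr _) (mul_linl _)).
apply: eq_bigr => w _; apply: eq_bigr => q _.
rewrite (sum_only w) => [|w' hw]; last first.
  apply: big1 => q' _.
  by rewrite mulXX eqxx eq_sym (negbTE hw) /= scale0r (lin0 (tens_linl _)) scaler0.
rewrite (sum_only q) => [|q' hq]; last first.
  by rewrite !mulXX !eqxx /= eq_sym (negbTE hq) /= scale0r (lin0 (tens_linr _)) scaler0.
by rewrite !mulXX !eqxx /= !scale1r scalerA.
Qed.

Definition tens3 a b (c : H N) : T3 N := [ffun w => a w.1.1 * b w.1.2 * c w.2].

Lemma tens3LE a b (c : H N) : tens3L (tens a b) c = tens3 a b c.
Proof. by apply/ffunP => w; rewrite !ffunE. Qed.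

Lemma tens3RE a b (c : H N) : tens3R a (tens b c) = tens3 a b c.
Proof. by apply/ffunP => w; rewrite !ffunE mulrA. Qed.

Lemma tens3L_linl (c : H N) : linear (fun t => tens3L t c).
Proof. by move=> k a b; apply/ffunP => w; rewrite !ffunE mulrDl scalerAl. Qed.

Lemma tens3L_linr (t : T N) : linear (tens3L t).
Proof. by move=> k a b; apply/ffunP => w; rewrite !ffunE mulrDr scalerAr. Qed.

Lemma tens3R_linl (t : T N) : linear (fun a => tens3R a t).
Proof. by move=> k a b; apply/ffunP => w; rewrite !ffunE mulrDl scalerAl. Qed.

Lemma tens3R_linr a : linear (tens3R a).
Proof. by move=> k b c; apply/ffunP => w; rewrite !ffunE mulrDr scalerAr. Qed.

(* The braided structure, for an arbitrary omega: only the R-terms of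
   trivial grading contribute on the H^i. *)
Section Braided.
Variable omega : algC.

Lemma tensor_eval_Rmat (W : lmodType algC) (G : idx N * idx N -> W) :
  tensor_eval (Rmat N omega) G = \sum_i \sum_j \sum_p
     omega_inv_pow omega (p * (i - j)) *: G ((i, j, p), (j, j + p, i - j)).
Proof.
rewrite /Rmat (lin_sum _ _ _ (tensor_eval_lin G)); apply: eq_bigr => i _.
rewrite (lin_sum _ _ _ (tensor_eval_lin G)); apply: eq_bigr => j _.
rewrite (lin_sum _ _ _ (tensor_eval_lin G)); apply: eq_bigr => p _.
by rewrite (linZ (tensor_eval_lin G)) tensor_eval_tens.
Qed.

Lemma bDeltaE a : bDelta omega a =
  tensor_eval (Delta a) (fun yz => tensor_eval (Rmat N omega)
     (fun r => tens (Defs.mul (Xe yz.1) (S (Xe r.2))) (ad (Xe r.1) (Xe yz.2)))).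
Proof. by []. Qed.

Lemma bDelta_lin : linear (@bDelta N omega).
Proof. by apply: lin_ext (lin_comp (tensor_eval_lin _) Delta_lin) => a; exact: bDeltaE. Qed.

Lemma bDelta_term i p q j k c :
  omega_inv_pow omega (c * (j - k)) *:
    tens (Defs.mul (Xe (i, i, p)) (S (Xe (k, k + c, j - k))))
         (ad (Xe (j, k, c)) (Xe (i + p, i + p, q)))
  = (omega_inv_pow omega (c * (j - k)) *
     (((i == j + c) && (p == k - j))%:R * ((c == 0) && (k == i + p))%:R))
     *: tens (X i j p) (X j j q).
Proof.
rewrite [S _]SXX mulXX [ad _ _]adXX tensZl tensZr !scalerA eqxx andbT.
have -> : k + c + (j - k) = j + c by ring.
have -> : k + (j - k) = j by ring.
have -> : - (j - k) = k - j by ring.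
by rewrite mulrA.
Qed.

(* the trivially graded terms of R carry the factor omega^0 = 1 *)
Lemma omega_inv_pow0 : omega_inv_pow omega (0 : 'Z_N) = 1.
Proof. by rewrite /omega_inv_pow oppr0 expr0. Qed.

Lemma bDeltaXX i s : bDelta omega (X i i s)
  = \sum_w \sum_(q | w + q == s) tens (X i i w) (X i i q).
Proof.
rewrite bDeltaE DeltaXe tensor_eval_DeltaX /=; apply: eq_bigr => p _; apply: eq_bigr => q _.
rewrite tensor_eval_Rmat /=.
under eq_bigr => a _ do under eq_bigr => b _ do under eq_bigr => c _ do rewrite bDelta_term.
rewrite (sum_only i) => [|a ha].
  rewrite (sum_only (i + p)) => [|b hb].
    rewrite (sum_only 0) => [|c hc]; last by rewrite (negbTE hc) /= !mulr0 scale0r.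
    rewrite mul0r omega_inv_pow0 mul1r addr0 !eqxx /= mulr1.
    have -> : i + p - i = p by ring.
    by rewrite eqxx scale1r.
  by apply: big1 => c _; rewrite (negbTE hb) andbF /= !mulr0 scale0r.
apply: big1 => b _; apply: big1 => c _.
have [->|hc] := eqVneq c 0; last by rewrite /= ?mulr0n !mulr0 scale0r.
by rewrite addr0 eq_sym (negbTE ha) /= !mul0r mulr0 scale0r.
Qed.

Lemma bDelta_of_fun i e : bDelta omega (of_fun i e) = coprod_fun i e.
Proof.
rewrite /of_fun (lin_sumZ _ _ _ _ bDelta_lin).
under eq_bigr => p _ do rewrite bDeltaXX scaler_sumr; rewrite /=.
under eq_bigr => p _ do under eq_bigr => w _ do rewrite scaler_sumr.
by rewrite (sum_pair (fun p u v => e p *: tens (X i i u) (X i i v))).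
Qed.

Lemma tens3L_bDelta i w c : tens3L (bDelta omega (X i i w)) c =
  \sum_w1 \sum_(w2 | w1 + w2 == w) tens3 (X i i w1) (X i i w2) c.
Proof.
rewrite bDeltaXX (lin_sum _ _ _ (tens3L_linl c)); apply: eq_bigr => w1 _.
by rewrite (lin_sum _ _ _ (tens3L_linl c)); apply: eq_bigr => w2 _; exact: tens3LE.
Qed.

Lemma tens3R_bDelta i w a : tens3R a (bDelta omega (X i i w)) =
  \sum_w1 \sum_(w2 | w1 + w2 == w) tens3 a (X i i w1) (X i i w2).
Proof.
rewrite bDeltaXX (lin_sum _ _ _ (tens3R_linr a)); apply: eq_bigr => w1 _.
by rewrite (lin_sum _ _ _ (tens3R_linr a)); apply: eq_bigr => w2 _; exact: tens3RE.
Qed.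

(* both sides of coassociativity equal sum_{a,b,c} e(a+b+c) X(a) (x) X(b) (x) X(c) *)
Lemma coprod_coassoc i e ds : coprod_fun i e = \sum_(ab <- ds) tens ab.1 ab.2 ->
  \sum_(ab <- ds) tens3L (bDelta omega ab.1) ab.2
  = \sum_(ab <- ds) tens3R ab.1 (bDelta omega ab.2).
Proof.
move=> hs.
rewrite (bilin_eval_coprod (B := fun a b => tens3L (bDelta omega a) b) _ hs); last first.
  by split=> [b|a]; [exact: (lin_comp (tens3L_linl b) bDelta_lin) | exact: tens3L_linr].
rewrite (bilin_eval_coprod (B := fun a b => tens3R a (bDelta omega b)) _ hs); last first.
  by split=> [b|a]; [exact: tens3R_linl | exact: (lin_comp (tens3R_linr a) bDelta_lin)].
transitivity (\sum_u \sum_v \sum_c e (u + v + c) *: tens3 (X i i u) (X i i v) (X i i c)).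
  rewrite exchange_big /=.
  transitivity (\sum_c \sum_u \sum_v e (u + v + c) *: tens3 (X i i u) (X i i v) (X i i c)).
    apply: eq_bigr => c _.
    rewrite -(sum_pair (fun w u v => e (w + c) *: tens3 (X i i u) (X i i v) (X i i c))).
    apply: eq_bigr => w _; rewrite tens3L_bDelta scaler_sumr; apply: eq_bigr => w1 _.
    by rewrite scaler_sumr.
  by rewrite exchange_big /=; apply: eq_bigr => u _; rewrite exchange_big.
apply: eq_bigr => w _.
under eq_bigr => u _ do under eq_bigr => v _ do rewrite -addrA.
rewrite -(sum_pair (fun q u v => e (w + q) *: tens3 (X i i w) (X i i u) (X i i v))).
apply: eq_bigr => q _; rewrite tens3R_bDelta scaler_sumr; apply: eq_bigr => u _.
by rewrite scaler_sumr.
Qed.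

Lemma bDelta_one_i i : bDelta omega (one_i i) = tens (one_i i) (one_i i).
Proof.
rewrite one_i_of_fun bDelta_of_fun -one_i_of_fun /one_i (lin_sum _ _ _ (tens_linl _)).
apply: eq_bigr => w _; rewrite (lin_sum _ _ _ (tens_linr _)).
by apply: eq_bigr => q _; rewrite scale1r.
Qed.

Lemma hopf_Hi i : hopf_on (Hi i) (@Defs.mul N) (one_i i) (bDelta omega) (eps_i i) (S_i i).
Proof.
split.
- split.
  + by rewrite one_i_of_fun of_fun_in.
  + by move=> a b ha hb; rewrite (memHi ha) (memHi hb) mul_of_fun of_fun_in.
  + by move=> a _; rewrite S_iE of_fun_in.
  + move=> a ha; rewrite (memHi ha) bDelta_of_fun.
    by eexists; exact: coprod_rep_spec.
  + move=> k a b c _ _ _; split.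
    * exact: mul_linl.
    * exact: mul_linr.
    * exact: bDelta_lin.
    * exact: (eps_i_lin i).
    * exact: S_i_lin.
- move=> a b c ha hb hc; rewrite (memHi ha) (memHi hb) (memHi hc) one_i_of_fun !mul_of_fun.
  by split; apply: of_fun_ext => p; rewrite ?mulrA ?mul1r ?mulr1.
- move=> a ds ha [_ hs]; have ha' := memHi ha; rewrite ha' bDelta_of_fun in hs.
  split.
  + exact: coprod_coassoc hs.
  + by rewrite (coprod_counitL hs) -ha'.
  + by rewrite (coprod_counitR hs) -ha'.
  + by rewrite (coprod_antipodeL hs) eps_iE.
  + by rewrite (coprod_antipodeR hs) eps_iE.
- move=> a b ds ds' ha hb [_ hs] [_ hs'].
  have ha' := memHi ha; have hb' := memHi hb.
  rewrite ha' bDelta_of_fun in hs; rewrite hb' bDelta_of_fun in hs'.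
  rewrite ha' hb' mul_of_fun bDelta_of_fun (coprod_mul hs hs'); split => //.
  by rewrite !eps_iE !of_fun_coef.
- by split; [exact: bDelta_one_i | rewrite eps_iE one_i_of_fun of_fun_coef].
Qed.

Lemma hopf_iota i j :
  hopf_iso (Hi i) (Hi j) (iota_face i j)
    (@Defs.mul N) (one_i i) (bDelta omega) (eps_i i) (S_i i)
    (@Defs.mul N) (one_i j) (bDelta omega) (eps_i j) (S_i j).
Proof.
split.
- by move=> k a b _ _; exact: iota_lin.
- by move=> a _; rewrite iotaE of_fun_in.
- move=> a b ha hb; rewrite !iotaE => /of_fun_inj h.
  by rewrite (memHi ha) (memHi hb); apply: of_fun_ext.
- move=> b hb; exists (iota_face j i b); first by rewrite iotaE of_fun_in.
  by rewrite !iotaE [RHS](memHi hb); apply: of_fun_ext => p; rewrite of_fun_coef.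
split.
- move=> a b ha hb; rewrite (memHi ha) (memHi hb) mul_of_fun !iotaE mul_of_fun.
  by apply: of_fun_ext => p; rewrite !of_fun_coef.
- by rewrite !one_i_of_fun iotaE; apply: of_fun_ext => p; rewrite of_fun_coef.
- move=> a ds ha [_ hs]; have ha' := memHi ha; rewrite ha' bDelta_of_fun in hs.
  have hB : bilin (fun a b => tens (iota_face i j a) (iota_face i j b)).
    split=> [b|a']; first exact: (lin_comp (tens_linl _) (iota_lin _ _)).
    exact: (lin_comp (tens_linr _) (iota_lin _ _)).
  rewrite (bilin_eval_coprod hB hs) ha' iotaE bDelta_of_fun /coprod_fun.
  by apply: eq_bigr => w _; apply: eq_bigr => q _; rewrite of_fun_coef !iotaX.
- by move=> a ha; rewrite !eps_iE iotaE of_fun_coef.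
- by move=> a ha; rewrite !S_iE !iotaE; apply: of_fun_ext => p; rewrite !of_fun_coef.
Qed.

End Braided.

End FaceAlgebra.

Theorem corollary4p5 (N : nat) (omega : algC)
    (hN : (1 < N)%N) (homega : N.-primitive_root omega) :
  (* _R H = (+)_{i in Z_N} H^i *)
  ((forall x : Defs.H N, in_RH x <-> x \in (\sum_(i : 'Z_N) Hi i)%VS)
   /\ directv (\sum_(i : 'Z_N) Hi i)%VS)
  /\
  (forall i : 'Z_N,
     (* the structure induced on H^i *)
     [/\ (forall p q : 'Z_N, Defs.mul (X i i p) (X i i q) = (p == q)%:R *: X i i p),
         (forall s : 'Z_N, bDelta omega (X i i s)
            = \sum_(w : 'Z_N) \sum_(q : 'Z_N | w + q == s) Defs.tens (X i i w) (X i i q)),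
         (forall s : 'Z_N, eps_t (X i i s) = (s == 0)%:R *: one_i i),
         (forall s : 'Z_N, eps_i i (X i i s) = (s == 0)%:R /\ S_i i (X i i s) = X i i (- s)) &
         (* H^i is a Hopf algebra over C 1^i *)
         hopf_on (Hi i) (@Defs.mul N) (one_i i) (bDelta omega) (eps_i i) (S_i i)])
  /\
  (* iota_face^j_i : H^i -> H^j is a Hopf algebra isomorphism *)
  (forall i j : 'Z_N,
     hopf_iso (Hi i) (Hi j) (iota_face i j)
       (@Defs.mul N) (one_i i) (bDelta omega) (eps_i i) (S_i i)
       (@Defs.mul N) (one_i j) (bDelta omega) (eps_i j) (S_i j)).
Proof.
split; first by split; [exact: in_RH_iff | exact: directHi].
split; last by move=> i j; exact: hopf_iota.
move=> i; split.
- by move=> p q; rewrite mulXX eqxx.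
- exact: bDeltaXX.
- exact: eps_t_X.
- by move=> s; split; [exact: eps_iX | exact: S_iX].
- exact: hopf_Hi.
Qed.
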